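(* Let $G=SU(3)\rtimes\mathbb{Z}_2$ and write $H^*(BG;\mathbb{Z}_2)=\mathbb{Z}_2[y_1,y_4,y_6]$ with $\deg y_i=i$ and $Sq^1(y_1)=y_1^2$, $Sq^1(y_4)=0$, $Sq^1(y_6)=y_1y_6$. Then the $Sq^1$-homology is $$H(H^*(BG;\mathbb{Z}_2),Sq^1)\cong\mathbb{Z}_2[y_4,y_6^2].$$
   Context: $\mathbb{Z}_2$ acts on $SU(3)$ by complex conjugation. The Steenrod square $Sq^1$ satisfies $Sq^1\circ Sq^1=0$ and acts as a derivation, so it is a differential on $H^*(BG;\mathbb{Z}_2)$; $H(\,\cdot\,,Sq^1)$ denotes its homology. Such generators $y_1,y_4,y_6$ exist (with $y_4,y_6$ restricting to the mod 2 reductions of the Chern classes $c_2,c_3$ on $BSU(3)$). *)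

From HB Require Import structures.
From mathcomp Require Import all_boot all_order all_algebra.
From mathcomp Require Import mpoly.
Set Implicit Arguments. Unset Strict Implicit. Unset Printing Implicit Defensive.
Import GRing.Theory.
Local Open Scope ring_scope.

Definition A := {mpoly 'F_2[3]}.

Definition i1 : 'I_3 := @Ordinal 3 0 isT.
Definition i4 : 'I_3 := @Ordinal 3 1 isT.
Definition i6 : 'I_3 := @Ordinal 3 2 isT.

Definition y1 : A := 'X_i1.
Definition y4 : A := 'X_i4.
Definition y6 : A := 'X_i6.

(* The target polynomial ring Z_2[a, b] with a := y_4, b := y_6^2. *)
Definition B := {mpoly 'F_2[2]}.
Definition j0 : 'I_2 := @Ordinal 2 0 isT.

Definition phi (q : B) : A :=
  comp_mpoly [tuple y4; y6 ^+ 2] q.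

From HB Require Import structures.
From mathcomp Require Import all_boot all_order all_algebra.
From mathcomp Require Import mpoly ring.
Import GRing.Theory.
Local Open Scope ring_scope.
Set Implicit Arguments.
Unset Strict Implicit.

(* Over F_2 a derivation is determined by its values on the generators, so
   Sq^1 = y1 (y1 d/dy1 + y6 d/dy6), which sends a monomial y^m to
   (m1 + m6) y1 y^m.  The complex therefore splits along monomials: y^m with
   m1 + m6 odd is mapped onto y1 y^m, so the cycles are spanned by the
   monomials of even weight m1 + m6, and such a monomial is a boundary as soon
   as m1 > 0.  The remaining ones, with m1 = 0 and m6 even, are the monomials
   of Z_2[y4, y6^2]; no nonzero combination of them is a boundary, since every
   boundary is divisible by y1. *)

Section Derivations.
Variables (R : comNzRingType) (n : nat).
Implicit Types (e : {mpoly R[n]} -> {mpoly R[n]}) (p : {mpoly R[n]}) (i : 'I_n) (m : 'X_{1..n}).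

Definition derivation e :=
  (forall p q, e (p + q) = e p + e q) /\ (forall p q, e (p * q) = e p * q + p * e q).

Lemma derivation0 e : derivation e -> e 0 = 0.
Proof. by case=> eD _; apply: (addrI (e 0)); rewrite -eD !addr0. Qed.

Lemma derivation1 e : derivation e -> e 1 = 0.
Proof. by case=> _ eM; apply: (addrI (e 1)); rewrite addr0 -{3}[1]mulr1 eM mulr1 mul1r. Qed.

Lemma derivation_eq e1 e2 : derivation e1 -> derivation e2 ->
  (forall c, e1 c%:MP = e2 c%:MP) -> (forall i, e1 'X_i = e2 'X_i) -> e1 =1 e2.
Proof.
move=> [e1D e1M] [e2D e2M] eC eX.
have eM p q : e1 p = e2 p -> e1 q = e2 q -> e1 (p * q) = e2 (p * q).
  by move=> ep eq; rewrite e1M e2M ep eq.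
have eXm m : e1 'X_[m] = e2 'X_[m].
  rewrite mpolyXE_id; elim/big_ind: _ => [||i _]; first by rewrite -mpolyC1 eC.
  - exact: eM.
  by elim: (m i) => [|k IHk]; rewrite ?expr0 -?mpolyC1 ?eC // exprS eM.
elim/mpolyind => [|c m p _ _ IHp]; first by rewrite -mpolyC0 eC.
by rewrite e1D e2D IHp -mul_mpolyC eM.
Qed.

Lemma mcoeffXM i p m : ('X_i * p)@_(m + U_(i)) = p@_m.
Proof. by rewrite mulrC addmC mcoeffMX. Qed.

Lemma mcoeffXM_eq0 i p m : m i = 0%N -> ('X_i * p)@_m = 0.
Proof.
move=> mi0; apply: memN_msupp_eq0; rewrite mulrC (perm_mem (msuppMX _ _)).
by apply/negP=> /mapP[k _ mE]; move: mi0; rewrite mE mnmDE mnm1E eqxx add1n.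
Qed.

Lemma mcoeffX_mderiv i p m : ('X_i * p^`M(i))@_m = p@_m *+ m i.
Proof.
case mi: (m i) => [|k]; first exact: mcoeffXM_eq0.
have -> : m = (m - U_(i) + U_(i))%MM by rewrite submK // lep1mP mi.
by rewrite mcoeffXM mcoeff_deriv mnmBE mnm1E eqxx mi subn1.
Qed.

Lemma mulX_mderivX i m : 'X_i * 'X_[m]^`M(i) = (m i)%:R *: 'X_[m] :> {mpoly R[n]}.
Proof.
rewrite mderivX -scalerAr -mpolyXD.
case mi: (m i) => [|k]; first by rewrite !scale0r.
by rewrite addmC submK // lep1mP mi.
Qed.

End Derivations.

Lemma mulrn_pchar2 (R : nzSemiRingType) (x : R) k :
  2 \in [pchar R] -> x *+ k = x *+ odd k.
Proof.
by move=> pchar2; rewrite -mulr_natr -(GRing.natr_mod_pchar pchar2) modn2 mulr_natr.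
Qed.

Lemma pchar_F2 : 2 \in [pchar 'F_2]. Proof. exact: pchar_Fp. Qed.

Lemma derivation_mpolyC_F2 n (e : {mpoly 'F_2[n]} -> {mpoly 'F_2[n]}) (c : 'F_2) :
  derivation e -> e c%:MP = 0.
Proof.
move=> der_e; have [->|->] : c = 0 \/ c = 1.
  by case: c => -[|[|//]] ?; [left|right]; apply/val_inj.
- by rewrite mpolyC0 derivation0.
- by rewrite mpolyC1 derivation1.
Qed.

Implicit Types (p z w : A) (q : B) (m : 'X_{1..3}) (g : 'X_{1..2}) (c : 'F_2).

Definition Sq1 (p : A) : A := y1 * (y1 * p^`M(i1) + y6 * p^`M(i6)).

Definition weight (m : 'X_{1..3}) : nat := m i1 + m i6.

Lemma Sq1_is_linear : linear Sq1.
Proof. by move=> c p q; rewrite /Sq1 !mderivD !mderivZ -!mul_mpolyC; ring. Qed.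

HB.instance Definition _ := GRing.isLinear.Build 'F_2 A A _ Sq1 Sq1_is_linear.

Lemma derivation_Sq1 : derivation Sq1.
Proof. by split=> p q; [exact: raddfD | rewrite /Sq1 !mderivM; ring]. Qed.

Lemma Sq1X m : Sq1 'X_[m] = (weight m)%:R *: 'X_[m + U_(i1)].
Proof. by rewrite /Sq1 !mulX_mderivX -scalerDl -natrD -scalerAr addmC mpolyXD. Qed.

Lemma mcoeff_Sq1 p m : (Sq1 p)@_(m + U_(i1)) = p@_m *+ weight m.
Proof. by rewrite /Sq1 mcoeffXM mcoeffD !mcoeffX_mderiv mulrnDr. Qed.

Lemma mcoeff_Sq1_eq0 p m : m i1 = 0%N -> (Sq1 p)@_m = 0.
Proof. exact: mcoeffXM_eq0. Qed.

Lemma Sq1_eq0_even_weight z m : Sq1 z = 0 -> z@_m != 0 -> ~~ odd (weight m).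
Proof.
move=> z0; apply: contraNN => odd_m.
by have := mcoeff_Sq1 z m; rewrite z0 mcoeff0 (mulrn_pchar2 _ _ pchar_F2) odd_m mulr1n => <-.
Qed.

Definition j1 : 'I_2 := @Ordinal 2 1 isT.

Definition phi_mnm (g : 'X_{1..2}) : 'X_{1..3} := [multinom [tuple 0%N; g j0; (g j1).*2]].

Lemma weight_phi_mnm g : weight (phi_mnm g) = (g j1).*2. Proof. by []. Qed.

Lemma phiX g : phi 'X_[g] = 'X_[phi_mnm g].
Proof.
rewrite /phi comp_mpolyX mpolyXE_id !big_ord_recl !big_ord0 !(tnth_nth 0) /=.
(* Innermost ordinals last: each [ord0] also occurs inside the [lift]s. *)
have -> : lift ord0 (lift ord0 ord0) = i6 by exact/val_inj.
have -> : lift ord0 ord0 = i4 by exact/val_inj.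
have -> : lift ord0 ord0 = j1 by exact/val_inj.
have -> : ord0 = j0 by exact/val_inj.
have -> : ord0 = i1 by exact/val_inj.
by rewrite expr0 mul1r !mulr1 -exprM mul2n.
Qed.

Lemma phi_is_linear : linear phi.
Proof. by move=> c p q; rewrite /phi comp_mpolyD comp_mpolyZ. Qed.

HB.instance Definition _ := GRing.isLinear.Build 'F_2 B A _ phi phi_is_linear.

Lemma phi_mnm_inj : injective phi_mnm.
Proof.
move=> g g' eq_gg'; apply/mnmP=> -[[|[|//]] lt_i2].
- have -> : Ordinal lt_i2 = j0 by exact/val_inj.
  by move/mnmP/(_ i4): eq_gg'.
- have -> : Ordinal lt_i2 = j1 by exact/val_inj.
  by apply: double_inj; move/mnmP/(_ i6): eq_gg'.
Qed.

Lemma mcoeff_phi q g : (phi q)@_(phi_mnm g) = q@_g.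
Proof.
elim/mpolyind: q => [|c g' q _ _ IHq]; first by rewrite raddf0 !mcoeff0.
by rewrite linearP /= phiX !mcoeffD !mcoeffZ IHq !mcoeffX (inj_eq phi_mnm_inj).
Qed.

Lemma phi_mnm_onto m : m i1 = 0%N -> ~~ odd (m i6) ->
  m = phi_mnm [multinom [tuple m i4; (m i6)./2]].
Proof.
move=> m1 m6; apply/mnmP=> -[[|[|[|//]]] lt_i3] /=.
- by have -> : Ordinal lt_i3 = i1 by exact/val_inj.
- by have -> : Ordinal lt_i3 = i4 by exact/val_inj.
- have -> : Ordinal lt_i3 = i6 by exact/val_inj.
  by rewrite /phi_mnm /= halfK (negbTE m6) subn0.
Qed.

Lemma Sq1_phi q : Sq1 (phi q) = 0.
Proof.
elim/mpolyind: q => [|c g q _ _ IHq]; first by rewrite !raddf0.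
rewrite !linearP /= IHq phiX Sq1X.
by rewrite weight_phi_mnm (mulrn_pchar2 1 _ pchar_F2) odd_double scale0r scaler0 addr0.
Qed.

Lemma even_weight_homologous m : ~~ odd (weight m) -> exists q w, 'X_[m] = phi q + Sq1 w.
Proof.
move=> even_m; case m1: (m i1) => [|k].
  exists 'X_[[multinom [tuple m i4; (m i6)./2]]], 0.
  by rewrite raddf0 addr0 phiX -phi_mnm_onto //; move: even_m; rewrite /weight m1.
have le_m : (U_(i1) <= m)%MM by rewrite lep1mP m1.
have odd_w : odd (weight (m - U_(i1))).
  by move: even_m; rewrite /weight !mnmBE !mnm1E m1 /= subn1 subn0 negbK.
exists 0, 'X_[m - U_(i1)].
by rewrite raddf0 add0r Sq1X submK // (mulrn_pchar2 1 _ pchar_F2) odd_w scale1r.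
Qed.

Lemma cycle_homologous z : Sq1 z = 0 -> exists q w, z = phi q + Sq1 w.
Proof.
move=> z0; rewrite {1}(mpolyE z); have : all (fun m => ~~ odd (weight m)) (msupp z).
  by apply/allP=> m; rewrite mcoeff_msupp; exact: Sq1_eq0_even_weight.
elim: (msupp z) => [_|m s IHs /andP[even_m even_s]].
  by exists 0, 0; rewrite big_nil !raddf0 addr0.
have [q' [w' Xm]] := even_weight_homologous even_m.
have [q [w sum_s]] := IHs even_s; exists (z@_m *: q' + q), (z@_m *: w' + w).
by rewrite big_cons sum_s !linearP /= Xm scalerDr addrACA.
Qed.

Lemma phi_boundary_eq0 q w : phi q = Sq1 w -> q = 0.
Proof.
move=> phi_q; apply/mpolyP=> g.
by rewrite mcoeff0 -mcoeff_phi phi_q mcoeff_Sq1_eq0.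
Qed.

Lemma eq_Sq1 d : derivation d ->
  d y1 = y1 ^+ 2 -> d y4 = 0 -> d y6 = y1 * y6 -> d =1 Sq1.
Proof.
move=> der_d d_y1 d_y4 d_y6; apply: (derivation_eq der_d derivation_Sq1).
  by move=> c; rewrite !derivation_mpolyC_F2 //; exact: derivation_Sq1.
move=> -[[|[|[|//]]] lt_i3]; rewrite [LHS]/= Sq1X /weight !mnm1E.
- have -> : Ordinal lt_i3 = i1 by exact/val_inj.
  by rewrite d_y1 /= scale1r expr2 -mpolyXD.
- have -> : Ordinal lt_i3 = i4 by exact/val_inj.
  by rewrite d_y4 /= scale0r.
- have -> : Ordinal lt_i3 = i6 by exact/val_inj.
  by rewrite d_y6 /= scale1r addmC mpolyXD.
Qed.

Theorem lemma6p6 (d : A -> A)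
  (d_add : forall p q : A, d (p + q) = d p + d q)
  (d_leibniz : forall p q : A, d (p * q) = d p * q + p * d q)
  (d_y1 : d y1 = y1 ^+ 2)
  (d_y4 : d y4 = 0)
  (d_y6 : d y6 = y1 * y6) :
  [/\ forall q : B, d (phi q) = 0,
      forall z : A, d z = 0 -> exists (q : B) (w : A), z = phi q + d w
    & forall (q : B) (w : A), phi q = d w -> q = 0].
Proof.
have d_Sq1 : d =1 Sq1 by apply: eq_Sq1.
split=> [q | z | q w]; rewrite !d_Sq1.
- exact: Sq1_phi.
- by move=> /cycle_homologous[q [w ->]]; exists q, w; rewrite d_Sq1.
- exact: phi_boundary_eq0.
Qed.
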